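(* Let $X$ be a finite set. For every preference relation $\trianglerighteq$ over $2^X$ there exist a state space $S=S^+\cup S^-$ with $S^+\cap S^-=\emptyset$ and $|S|\le 2(2^{|X|}-1)$, and a function $U:X\times S\to\mathbb{R}$, such that $$V(A)=\sum_{s\in S^+}\max_{a\in A} U(a,s)-\sum_{s\in S^-}\max_{a\in A} U(a,s)$$ represents $\trianglerighteq$, i.e. $A\trianglerighteq B$ if and only if $V(A)\ge V(B)$.
   Context: A preference relation over $2^X$ (the set of menus) is a complete and transitive binary relation on $2^X$. *)

From mathcomp Require Import all_boot all_order all_algebra.
Set Implicit Arguments. Unset Strict Implicit. Unset Printing Implicit Defensive.
Import Order.TTheory GRing.Theory Num.Theory.
Local Open Scope ring_scope.

(* Menus are the nonempty subsets of X (max over the empty set is undefined). *)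
Definition menu (X : finType) (A : {set X}) : Prop := A != set0.

Definition is_preference (X : finType) (pref : {set X} -> {set X} -> Prop) : Prop :=
  (forall A B, menu A -> menu B -> pref A B \/ pref B A) /\
  (forall A B C, menu A -> menu B -> menu C -> pref A B -> pref B C -> pref A C).

(* max_{a in A} f a for a nonempty A (arbitrary value 0 on the empty set). *)
Definition setmax (R : realFieldType) (X : finType) (f : X -> R) (A : {set X}) : R :=
  match [pick a in A] with
  | Some a0 => \big[Num.max/f a0]_(a in A) f a
  | None => 0
  end.

Definition Vrep (R : realFieldType) (X S : finType) (Splus : {set S})
  (U : X -> S -> R) (A : {set X}) : R :=
  \sum_(s in Splus) setmax (fun a => U a s) A
  - \sum_(s in ~: Splus) setmax (fun a => U a s) A.

From mathcomp Require Import all_boot all_order all_algebra zify.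
From Stdlib Require Import ClassicalEpsilon.
Set Implicit Arguments. Unset Strict Implicit. Unset Printing Implicit Defensive.
Import Order.TTheory GRing.Theory Num.Theory.
Local Open Scope ring_scope.

(** A complete and transitive relation on the finitely many menus has an
  ordinal utility v (the number of menus a menu weakly beats), so it suffices
  to represent an arbitrary function v of nonempty menus. By Möbius inversion
  on the subset lattice, -v(A) = sum_(T ⊇ A) c(T) for some weights c. Take one
  state per nonempty T in which the alternatives of T are worth -|c(T)| and the
  others 0: the best alternative of A in that state is worth -|c(T)| if A ⊆ T
  and 0 otherwise. Counting the state positively when c(T) >= 0 and negatively
  otherwise, it contributes -c(T) exactly when A ⊆ T, so V(A) = v(A). This uses
  2^|X| - 1 states. *)

Section OrdinalUtility.
Variables (T : finType) (D : pred T) (r : T -> T -> Prop).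
Hypothesis r_total : {in D &, forall x y, r x y \/ r y x}.
Hypothesis r_trans : {in D & &, forall x y z, r x y -> r y z -> r x z}.

Lemma total_preorder_utility :
  exists v : T -> nat, {in D &, forall x y, r x y <-> (v y <= v x)%N}.
Proof.
pose rb x y : bool :=
  if excluded_middle_informative (r x y) then true else false.
have rbP x y : reflect (r x y) (rb x y).
  by rewrite /rb; case: excluded_middle_informative => ?; constructor.
pose lower x := [set y in D | rb x y].
have lower_sub x y : x \in D -> y \in D -> r x y -> lower y \subset lower x.
  move=> Dx Dy rxy; apply/subsetP => z; rewrite !inE => /andP[Dz /rbP ryz].
  by rewrite Dz; apply/rbP; exact: (r_trans Dx Dy Dz rxy ryz).
exists (fun x => #|lower x|) => x y Dx Dy; split.
  by move/(lower_sub _ _ Dx Dy)/subset_leq_card.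
move=> le_yx; have [//|not_rxy] := rbP x y.
suff: (#|lower x| < #|lower y|)%N by rewrite ltnNge le_yx.
apply: proper_card.
have ryx : r y x by case: (r_total Dx Dy).
apply/properP; split; first exact: lower_sub.
exists y; rewrite !inE Dy /=; last by apply/rbP.
by apply/rbP; case: (r_total Dy Dy).
Qed.

End OrdinalUtility.

Section SetMax.
Variables (R : realFieldType) (X : finType).

Lemma setmax_mem (f : X -> R) (A : {set X}) :
  A != set0 -> exists2 a, a \in A & setmax f A = f a.
Proof.
case/set0Pn => b bA; rewrite /setmax.
case: pickP => [a0 a0A|/(_ b)]; last by rewrite bA.
elim/big_ind: _ => [|_ _ [a aA ->] [a' a'A ->]|a aA]; first by exists a0.
- by case: (leP (f a) (f a')); [exists a'|exists a].
- by exists a.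
Qed.

Lemma setmax_ge (f : X -> R) (A : {set X}) (b : X) :
  b \in A -> f b <= setmax f A.
Proof.
move=> bA; rewrite /setmax; case: pickP => [a0 _|/(_ b)]; last by rewrite bA.
by rewrite (bigD1 b) //= le_max lexx.
Qed.

Lemma setmax_indicator (T A : {set X}) (k : R) : k <= 0 -> A != set0 ->
  setmax (fun a => if a \in T then k else 0) A = if A \subset T then k else 0.
Proof.
set f := fun a => _; move=> k_le0 A0.
have [a aA max_a] := setmax_mem f A0; rewrite max_a.
case: ifPn => [/subsetP AT|/subsetPn[b bA bNT]]; first by rewrite /f AT.
have := setmax_ge f bA; rewrite max_a.
rewrite /f (negbTE bNT); case: (a \in T) => // k_ge0.
by apply/eqP; rewrite eq_le k_le0.
Qed.

End SetMax.

Section SupersetSums.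
Variables (V : zmodType) (X : finType).
Implicit Types A T : {set X}.

Lemma superset_sum_inversion (g : {set X} -> V) :
  exists c : {set X} -> V, forall A, \sum_(T : {set X} | A \subset T) c T = g A.
Proof.
suff solve_large k : exists c : {set X} -> V,
    forall A, (#|X| < #|A| + k)%N -> \sum_(T : {set X} | A \subset T) c T = g A.
  have [c cE] := solve_large #|X|.+1; exists c => A; apply: cE.
  by have := max_card A; lia.
(* Induction on k: the new sets A, with #|A| + k = #|X|, have all their strict
   supersets already solved, so c A is forced. *)
elim: k => [|k [c cE]].
  by exists (fun=> 0) => A; have := max_card A; lia.
pose c' T := if (#|T| + k == #|X|)%N
  then g T - \sum_(T' : {set X} | T \proper T') c T' else c T.
have c'E T : (#|X| < #|T| + k)%N -> c' T = c T.
  by move=> lt_XT; rewrite /c' ifN_eq //; lia.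
exists c' => A; rewrite addnS ltnS leq_eqVlt.
case/orP=> [/eqP size_A|large_A]; last first.
  by rewrite -cE //; apply: eq_bigr => T /subset_leq_card AT; apply: c'E; lia.
have c'A : c' A = g A - \sum_(T : {set X} | A \proper T) c T.
  by rewrite /c' size_A eqxx.
rewrite (bigD1 A) //= c'A.
have -> : \sum_(T : {set X} | (A \subset T) && (T != A)) c' T
          = \sum_(T : {set X} | A \proper T) c T.
  apply: eq_big => [T|T /andP[AT TA]]; first by rewrite properEneq andbC eq_sym.
  apply: c'E; have : A \proper T by rewrite properEneq eq_sym TA AT.
  by move/proper_card; lia.
by rewrite subrK.
Qed.

End SupersetSums.

Section Representation.
Variables (R : realFieldType) (X : finType).

Lemma Vrep_signed_indicators (S : finType) (Ts : S -> {set X}) (w : S -> R)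
    (A : {set X}) : A != set0 ->
  Vrep [set s | 0 <= w s] (fun a s => if a \in Ts s then - `|w s| else 0) A
  = - \sum_(s | A \subset Ts s) w s.
Proof.
move=> A0; rewrite /Vrep -sumrN -[RHS]sumrN [RHS]big_mkcond.
rewrite [RHS](bigID (mem [set s | 0 <= w s])) /=.
congr (_ + _); apply: eq_big => s; rewrite ?inE // => w_s.
  by rewrite setmax_indicator ?oppr_le0 // ger0_norm.
rewrite setmax_indicator ?oppr_le0 // ltr0_norm ?ltNge //.
by case: ifP; rewrite ?opprK ?oppr0.
Qed.

Lemma menu_function_representable (g : {set X} -> R) :
  exists (S : finType) (Splus : {set S}) (U : X -> S -> R),
    #|S| = (2 ^ #|X|).-1 /\ forall A, menu A -> Vrep Splus U A = g A.
Proof.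
have [c cE] := superset_sum_inversion (fun A => - g A).
pose S := {T : {set X} | T \in [set~ set0]}.
exists S, [set s : S | 0 <= c (val s)].
exists (fun a (s : S) => if a \in val s then - `|c (val s)| else 0).
split=> [|A A0].
  rewrite card_sig (eq_card (B := [set~ set0])) // cardsC1.
  by rewrite -cardsT -powersetT card_powerset cardsT.
rewrite (Vrep_signed_indicators val (fun s => c (val s))) //.
rewrite -(big_sub_cond [set~ set0] (fun T => A \subset T) c) -[RHS]opprK -cE.
congr (- _); apply: eq_bigl => T; rewrite !inE andbC.
case: (boolP (A \subset T)) => // AT.
by apply: contraNneq A0 => T0; rewrite -subset0 -T0.
Qed.

End Representation.

Theorem corollary7 (R : realFieldType) (X : finType)
  (pref : {set X} -> {set X} -> Prop) :
  is_preference pref ->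
  exists (S : finType) (Splus : {set S}) (U : X -> S -> R),
    (#|S| <= 2 * (2 ^ #|X| - 1))%N /\
    forall A B : {set X}, menu A -> menu B ->
      (pref A B <-> Vrep Splus U B <= Vrep Splus U A).
Proof.
move=> [pref_total pref_trans].
have [v vE] := total_preorder_utility (D := [pred A : {set X} | A != set0])
  pref_total pref_trans.
have [S [Splus [U [card_S VE]]]] :=
  menu_function_representable (fun A => (v A)%:R : R).
exists S, Splus, U; split; first by rewrite card_S; lia.
by move=> A B A0 B0; rewrite !VE // ler_nat; apply: vE.
Qed.
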